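(* Let $T:\mathbf{Set}\to\mathbf{Set}$ be a functor with a diagonal-preserving lax extension $L$, let $\tau:(-)^n\to T$ be a natural transformation, and let $\lambda$ be the Moss lifting induced by $\tau$ (w.r.t. $L$). Then for every set $X$ and all $x_1,\dots,x_n\in X$, $$\lambda_X(\{x_1\},\dots,\{x_n\})=\{\tau_X(x_1,\dots,x_n)\}.$$ In particular $\lambda$ preserves singletons.
   Context: For relations $R\subseteq X\times Y$, $S\subseteq Y\times Z$, write $R^\circ\subseteq Y\times X$ for the converse and $R;S\subseteq X\times Z$ for the (diagrammatic) composite; functions are identified with their graphs; $\Delta_X$ is the diagonal (identity relation) on $X$. A lax extension of $T$ is an assignment $L$ mapping each relation $R\subseteq X\times Y$ to a relation $LR\subseteq TX\times TY$ such that $L(R^\circ)=(LR)^\circ$, $R'\subseteq R$ implies $LR'\subseteq LR$, $LR;LS\subseteq L(R;S)$, and $Tf\subseteq Lf$ for every function $f$. It is diagonal-preserving if $L\Delta_X\subseteq\Delta_{TX}$ for all $X$. Let $\in_X\subseteq X\times\mathcal{P}X$ be the element-of relation. The Moss lifting induced by a natural transformation $\tau:(-)^n\to T$ is the $n$-ary predicate lifting $\lambda_X(X_1,\dots,X_n)=\{t\in TX\mid (t,\tau_{\mathcal{P}X}(X_1,\dots,X_n))\in L(\in_X)\}$ for $X_1,\dots,X_n\subseteq X$. A predicate lifting $\lambda/n$ preserves singletons if $|\lambda_X(\{x_1\},\dots,\{x_n\})|=1$ for all sets $X$ and $x_i\in X$. *)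

Definition rel (X Y : Type) := X -> Y -> Prop.
Definition subrel {X Y} (R S : rel X Y) : Prop := forall x y, R x y -> S x y.
Definition releq {X Y} (R S : rel X Y) : Prop := forall x y, R x y <-> S x y.
Definition conv {X Y} (R : rel X Y) : rel Y X := fun y x => R x y.
Definition rcomp {X Y Z} (R : rel X Y) (S : rel Y Z) : rel X Z :=
  fun x z => exists y, R x y /\ S y z.
Definition graph {X Y} (f : X -> Y) : rel X Y := fun x y => f x = y.
Definition diag (X : Type) : rel X X := fun x y => x = y.
Definition elem_of (X : Type) : rel X (X -> Prop) := fun x A => A x.

Definition is_functor (T : Type -> Type)
  (fmap : forall X Y : Type, (X -> Y) -> T X -> T Y) : Prop :=
  (forall X (t : T X), fmap X X (fun x => x) t = t) /\
  (forall X Y Z (f : X -> Y) (g : Y -> Z) (t : T X),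
      fmap X Z (fun x => g (f x)) t = fmap Y Z g (fmap X Y f t)).

Definition is_lax_extension (T : Type -> Type)
  (fmap : forall X Y : Type, (X -> Y) -> T X -> T Y)
  (L : forall X Y : Type, rel X Y -> rel (T X) (T Y)) : Prop :=
  (forall X Y (R : rel X Y), releq (L Y X (conv R)) (conv (L X Y R))) /\
  (forall X Y (R' R : rel X Y), subrel R' R -> subrel (L X Y R') (L X Y R)) /\
  (forall X Y Z (R : rel X Y) (S : rel Y Z),
      subrel (rcomp (L X Y R) (L Y Z S)) (L X Z (rcomp R S))) /\
  (forall X Y (f : X -> Y), subrel (graph (fmap X Y f)) (L X Y (graph f))).

Definition diagonal_preserving (T : Type -> Type)
  (L : forall X Y : Type, rel X Y -> rel (T X) (T Y)) : Prop :=
  forall X, subrel (L X X (diag X)) (diag (T X)).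

(* natural transformation τ : (-)^n -> T ; X^n is represented as ('I_n -> X),
   here with index type {i : nat | i < n}. *)
Definition ord (n : nat) := { i : nat | i < n }.

Definition is_nat_trans (T : Type -> Type)
  (fmap : forall X Y : Type, (X -> Y) -> T X -> T Y) (n : nat)
  (tau : forall X : Type, (ord n -> X) -> T X) : Prop :=
  forall X Y (f : X -> Y) (v : ord n -> X),
    fmap X Y f (tau X v) = tau Y (fun i => f (v i)).

Definition moss_lifting (T : Type -> Type)
  (L : forall X Y : Type, rel X Y -> rel (T X) (T Y)) (n : nat)
  (tau : forall X : Type, (ord n -> X) -> T X)
  (X : Type) (Xs : ord n -> (X -> Prop)) : T X -> Prop :=
  fun t => L X (X -> Prop) (elem_of X) t (tau (X -> Prop) Xs).

Definition singleton {X : Type} (x : X) : X -> Prop := fun y => y = x.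

Definition preserves_singletons (T : Type -> Type) (n : nat)
  (lam : forall X : Type, (ord n -> (X -> Prop)) -> T X -> Prop) : Prop :=
  forall (X : Type) (xs : ord n -> X),
    exists t, lam X (fun i => singleton (xs i)) t /\
      forall t', lam X (fun i => singleton (xs i)) t' -> t' = t.


(* By naturality, tau_PX({x_1},...,{x_n}) = T{-}(tau_X xs), where {-} : X -> PX.
   The graph of {-} is contained in ∈_X, so tau_X xs is in the lifting.
   Conversely, L(∈_X) ; L({-}°) ⊆ L(∈_X ; {-}°) = L(Δ_X) ⊆ Δ_TX, which forces any
   element of the lifting to equal tau_X xs. *)

Section LaxExtension.

Variable T : Type -> Type.
Variable fmap : forall X Y : Type, (X -> Y) -> T X -> T Y.
Variable L : forall X Y : Type, rel X Y -> rel (T X) (T Y).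
Hypothesis HL : is_lax_extension T fmap L.

Lemma lax_mono X Y (R' R : rel X Y) : subrel R' R -> subrel (L X Y R') (L X Y R).
Proof. destruct HL as [_ [Hmono _]]. exact (Hmono X Y R' R). Qed.

Lemma lax_comp X Y Z (R : rel X Y) (S : rel Y Z) t u v :
  L X Y R t u -> L Y Z S u v -> L X Z (rcomp R S) t v.
Proof.
  destruct HL as [_ [_ [Hcomp _]]]. intros HR HS.
  apply Hcomp. exists u. split; assumption.
Qed.

Lemma lax_graph X Y (f : X -> Y) t : L X Y (graph f) t (fmap X Y f t).
Proof. destruct HL as [_ [_ [_ Hfun]]]. apply Hfun. reflexivity. Qed.

Lemma lax_graph_conv X Y (f : X -> Y) t :
  L Y X (conv (graph f)) (fmap X Y f t) t.
Proof.
  destruct HL as [Hconv _]. apply (proj2 (Hconv X Y (graph f) (fmap X Y f t) t)).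
  apply lax_graph.
Qed.

Lemma graph_singleton_sub_elem_of X :
  subrel (graph (@singleton X)) (elem_of X).
Proof. intros x A <-. reflexivity. Qed.

Lemma elem_of_conv_singleton_sub_diag X :
  subrel (rcomp (elem_of X) (conv (graph (@singleton X)))) (diag X).
Proof. intros x y [A [HxA <-]]. exact HxA. Qed.

Hypothesis Hdiag : diagonal_preserving T L.

Lemma lax_elem_of_fmap_singleton X (t u : T X) :
  L X (X -> Prop) (elem_of X) t (fmap X (X -> Prop) (@singleton X) u) <-> t = u.
Proof.
  split.
  - intros Ht. apply Hdiag.
    apply (lax_mono _ _ _ _ (elem_of_conv_singleton_sub_diag X)).
    exact (lax_comp _ _ _ _ _ _ _ _ Ht (lax_graph_conv _ _ _ u)).
  - intros ->. apply (lax_mono _ _ _ _ (graph_singleton_sub_elem_of X)).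
    apply lax_graph.
Qed.

Variable n : nat.
Variable tau : forall X : Type, (ord n -> X) -> T X.
Hypothesis Htau : is_nat_trans T fmap n tau.

Lemma moss_lifting_singletons X (xs : ord n -> X) (t : T X) :
  moss_lifting T L n tau X (fun i => singleton (xs i)) t <-> t = tau X xs.
Proof.
  unfold moss_lifting.
  rewrite <- (Htau X (X -> Prop) (@singleton X) xs).
  apply lax_elem_of_fmap_singleton.
Qed.

End LaxExtension.

Theorem mainTheorem3
  (T : Type -> Type) (fmap : forall X Y : Type, (X -> Y) -> T X -> T Y)
  (L : forall X Y : Type, rel X Y -> rel (T X) (T Y))
  (n : nat) (tau : forall X : Type, (ord n -> X) -> T X)
  (HT : is_functor T fmap)
  (HL : is_lax_extension T fmap L)
  (Hdiag : diagonal_preserving T L)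
  (Htau : is_nat_trans T fmap n tau) :
  (forall (X : Type) (xs : ord n -> X) (t : T X),
      moss_lifting T L n tau X (fun i => singleton (xs i)) t <-> t = tau X xs)
  /\ preserves_singletons T n (moss_lifting T L n tau).
Proof.
  pose proof (moss_lifting_singletons T fmap L HL Hdiag n tau Htau) as key.
  split; [exact key |].
  intros X xs. exists (tau X xs). split.
  - apply key. reflexivity.
  - intros t' Ht'. apply key. exact Ht'.
Qed.
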